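(* Let $H$ be a finite group of odd order. Then \[ \mathsf{GEN}(H)=\begin{cases} *0, & \text{if } |H|=1,\\ *2, & \text{if } |H|>1 \text{ and } d(H)\in\{1,2\},\\ *1, & \text{otherwise.}\end{cases} \]
   Context: For a finite group $G$, $\mathsf{GEN}(G)$ is the following impartial two-player game. A position is a set of elements selected so far; the starting position is $\emptyset$. From a position $P$ with $\langle P\rangle\neq G$, the player to move selects some $g\in G\setminus P$, producing the position $P\cup\{g\}$ (these are the options of $P$); a position $P$ with $\langle P\rangle = G$ has no options. The nim-number of a position is defined recursively by $\operatorname{nim}(P)=\operatorname{mex}\{\operatorname{nim}(Q): Q \text{ an option of } P\}$, where $\operatorname{mex}(A)$ is the least nonnegative integer not in $A$. We write $\mathsf{GEN}(G)=*n$ if $\operatorname{nim}(\emptyset)=n$. $d(G)$ denotes the minimum size of a generating set of $G$. *)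

From HB Require Import structures.
From mathcomp Require Import all_boot all_order all_fingroup.
Set Implicit Arguments. Unset Strict Implicit. Unset Printing Implicit Defensive.
Local Open Scope group_scope.

(* mex s = least natural number not occurring in s (it is <= size s). *)
Definition mex (s : seq nat) : nat :=
  find (fun n => n \notin s) (iota 0 (size s).+1).

Definition gen_options (gT : finGroupType) (G P : {set gT}) : seq {set gT} :=
  if <<P>> == G then [::] else [seq g |: P | g <- enum (G :\: P)].

(* nim-number computed with fuel n; each move increases |P| (P a subset of G),
   so fuel #|G|.+1 suffices from the empty position. *)
Fixpoint nim_fuel (gT : finGroupType) (G : {set gT}) (n : nat) (P : {set gT}) : nat :=
  match n with
  | 0 => 0
  | n'.+1 => mex [seq nim_fuel G n' Q | Q <- gen_options G P]
  end.

Definition nim (gT : finGroupType) (G P : {set gT}) : nat := nim_fuel G #|G|.+1 P.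

Definition gen_nim (gT : finGroupType) (G : {set gT}) : nat := nim G set0.

Definition dgen (gT : finGroupType) (G : {set gT}) : nat :=
  \big[minn/#|G|]_(A : {set gT} | (A \subset G) && (<<A>> == G)) #|A|.

From HB Require Import structures.
From mathcomp Require Import all_boot all_order all_fingroup.
Set Implicit Arguments. Unset Strict Implicit. Unset Printing Implicit Defensive.
Import Order.TTheory.

(** In a group of odd order, a set [P] of even size is a proper subset of
    [<<P>>], so a player facing [P] can move inside [<<P>>]: the generated
    subgroup stays the same and only the parity of the position flips.
    Hence the nim-number of a position depends only on whether [P] generates,
    whether one more element suffices, and the parity of [#|P|] (this closed
    form is [gen_value]); the value of the empty position is [2] exactly
    when some element together with one other generates, i.e. [d(G) <= 2]. *)

Lemma odd_setU1 (T : finType) (A : {set T}) x :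
  x \notin A -> odd #|x |: A| = ~~ odd #|A|.
Proof. by move=> xA; rewrite cardsU1 xA. Qed.

Lemma mex_eq (s : seq nat) n :
  (forall k, k < n -> k \in s) -> n \notin s -> mex s = n.
Proof.
move=> sub_s n_s; rewrite /mex.
have n_le_s : n <= size s.
  rewrite -(size_iota 0 n); apply: uniq_leq_size; first exact: iota_uniq.
  by move=> k; rewrite mem_iota add0n => /andP[_ /sub_s].
have has_n : has (fun k => k \notin s) (iota 0 (size s).+1).
  by apply/hasP; exists n; rewrite // mem_iota add0n ltnS.
have := has_n; rewrite has_find size_iota => find_lt.
have := nth_find 0 has_n; rewrite nth_iota // add0n => find_s.
apply/eqP; rewrite eqn_leq; apply/andP; split; rewrite leqNgt; apply/negP.
- move/(before_find 0); rewrite nth_iota ?ltnS // add0n.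
  by rewrite n_s.
- by move/sub_s; rewrite (negbTE find_s).
Qed.

Section Generation.
Variables (gT : finGroupType) (G : {group gT}).
Local Open Scope group_scope.
Implicit Types P Q : {set gT}.

Lemma gen_setU1 P g : g \in <<P>> -> <<g |: P>> = <<P>>.
Proof.
move=> gP; apply/eqP; rewrite eqEsubset (genS (subsetUr _ _)) andbT.
by rewrite gen_subG subUset sub1set gP subset_gen.
Qed.

Lemma dgen_leq n :
  (dgen G <= n) = [exists A : {set gT}, [&& A \subset G, <<A>> == G & #|A| <= n]].
Proof.
apply/idP/idP => [|/existsP[A /and3P[AG genA le_n]]].
  apply: contraTT => /existsPn noA; rewrite -ltnNge.
  (* [minn] is [Order.min] on [nat], so the order-theoretic [bigmin] lemmas apply. *)
  change (n < \big[Order.min/#|G|]_(B : {set gT} | (B \subset G) && (<<B>> == G)) #|B|)%O.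
  apply/bigmin_gtP; split=> [|A /andP[AG genA]].
    by have := noA G; rewrite subxx genGid eqxx /= -ltnNge.
  by have := noA A; rewrite AG genA /= -ltnNge.
apply: leq_trans le_n.
change (\big[Order.min/#|G|]_(B : {set gT} | (B \subset G) && (<<B>> == G)) #|B| <= #|A|)%O.
by apply: bigmin_le_cond; rewrite AG.
Qed.

Lemma dgen_gt0 : (0 < dgen G) = (#|G| != 1%N).
Proof.
rewrite ltnNge dgen_leq -trivg_card1; congr negb; apply/existsP/eqP.
  case=> A /and3P[_ /eqP genA]; rewrite leqn0 cards_eq0 => /eqP A0.
  by rewrite -genA A0 gen0.
by move=> G1; exists set0; rewrite sub0set gen0 G1 eqxx cards0.
Qed.

Definition almost_gen P := [exists g in G, <<g |: P>> == G].

Lemma almost_gen_gen P : <<P>> = G -> almost_gen P.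
Proof.
by move=> genP; apply/existsP; exists 1; rewrite group1 gen_setU1 ?group1 // genP eqxx.
Qed.

Lemma almost_genP P :
  <<P>> != G -> almost_gen P -> exists2 g, g \in G :\: P & <<g |: P>> = G.
Proof.
move=> PnG /existsP[g /andP[gG /eqP genP]]; exists g => //.
rewrite inE gG andbT; apply: contra PnG => gP.
by rewrite -genP gen_setU1 // mem_gen.
Qed.

Lemma almost_gen_subset P Q : Q \subset G -> P \subset Q -> almost_gen P -> almost_gen Q.
Proof.
move=> QG PQ /existsP[g /andP[gG /eqP genP]]; apply/existsP; exists g.
rewrite gG eqEsubset gen_subG subUset sub1set gG QG /=.
by rewrite -{1}genP genS // setUS.
Qed.

Lemma almost_gen_setU1 P g : g \in <<P>> -> almost_gen (g |: P) = almost_gen P.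
Proof.
move=> gP; apply: eq_existsb => h.
by rewrite setUCA gen_setU1 // (subsetP (genS (subsetUr [set h] P))).
Qed.

Lemma not_almost_gen_setU1 P g : ~~ almost_gen P -> g \in G -> <<g |: P>> != G.
Proof. by move=> /existsPn/(_ g); rewrite negb_and => /orP[/negP|]. Qed.

Lemma dgen_le2 : (dgen G <= 2) = [exists g in G, almost_gen [set g]].
Proof.
rewrite dgen_leq; apply/existsP/existsP => [[A /and3P[AG genA A_le2]]|].
  have [g [h [gG hG A_gh]]] : exists g h, [/\ g \in G, h \in G & A \subset [set h; g]].
    move: A_le2 AG; rewrite leq_eqVlt ltnS leq_eqVlt ltnS leqn0.
    case/or3P=> [/cards2P[x [y [_ ->]]] | /cards1P[x ->] | /eqP/cards0_eq->].
    - by rewrite subUset !sub1set => /andP[xG yG]; exists y, x.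
    - by rewrite sub1set => xG; exists x, x; rewrite subsetUr.
    - by exists 1, 1; rewrite group1 sub0set.
  exists g; rewrite gG; apply/existsP; exists h; rewrite hG eqEsubset.
  by rewrite gen_subG subUset !sub1set hG gG -{1}(eqP genA) genS.
case=> g /andP[gG /existsP[h /andP[hG genhg]]]; exists [set h; g].
by rewrite subUset !sub1set hG gG genhg cardsU1 cards1 addn1 ltnS leq_b1.
Qed.

End Generation.

Section GenGame.
Variables (gT : finGroupType) (G : {group gT}).
Local Open Scope group_scope.
Implicit Types (P Q : {set gT}) (f : {set gT} -> nat).

Lemma gen_optionsP P Q :
  <<P>> != G -> reflect (exists2 g, g \in G :\: P & Q = g |: P) (Q \in gen_options G P).
Proof.
rewrite /gen_options => /negbTE->.
by apply: (iffP mapP) => -[g gGP ->]; exists g; move: gGP; rewrite ?mem_enum.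
Qed.

Lemma gen_options_proper P Q :
  Q \in gen_options G P -> (G :\: Q) \proper (G :\: P).
Proof.
rewrite /gen_options; case: eqP => // _ /mapP[g]; rewrite mem_enum => gGP ->.
apply/properP; split; first by rewrite setDS // subsetUr.
by exists g; rewrite // !inE eqxx.
Qed.

Lemma gen_options_sub P Q : P \subset G -> Q \in gen_options G P -> Q \subset G.
Proof.
rewrite /gen_options; case: eqP => // _ PG /mapP[g].
by rewrite mem_enum => /setDP[gG _] ->; rewrite subUset sub1set gG.
Qed.

Lemma mex_gen_options f P n : <<P>> != G ->
    (forall k, k < n -> exists2 g, g \in G :\: P & f (g |: P) = k) ->
    (forall g, g \in G :\: P -> f (g |: P) != n) ->
  mex [seq f Q | Q <- gen_options G P] = n.
Proof.
move=> PnG hit miss; apply: mex_eq => [k /hit[g gGP <-]|].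
  by apply: map_f; apply/gen_optionsP => //; exists g.
by apply/mapP => -[Q /gen_optionsP-/(_ PnG)[g gGP ->] /esym/eqP]; apply/negP/miss.
Qed.

Lemma nim_mex_solution f P :
    (forall Q, Q \subset G -> f Q = mex [seq f R | R <- gen_options G Q]) ->
  P \subset G -> nim G P = f P.
Proof.
move=> f_mex PG; rewrite /nim.
have : #|G :\: P| < #|G|.+1 by rewrite ltnS subset_leq_card ?subsetDl.
elim: #|G|.+1 P PG => // n IHn P PG lt_n /=.
rewrite f_mex //; congr mex; apply/eq_in_map => Q P_Q.
apply: IHn; first exact: gen_options_sub P_Q.
by rewrite -ltnS (leq_trans _ lt_n) // ltnS proper_card // gen_options_proper.
Qed.

End GenGame.

Section OddGenGame.
Variables (gT : finGroupType) (G : {group gT}).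
Local Open Scope group_scope.
Hypothesis oddG : odd #|G|.
Implicit Types P Q : {set gT}.
Local Notation almost_gen := (almost_gen G).

Lemma proper_gen_even P : P \subset G -> ~~ odd #|P| -> P \proper <<P>>.
Proof.
move=> PG evenP; rewrite properEneq subset_gen andbT; apply: contraNneq evenP => ->.
by apply: dvdn_odd oddG; apply: cardSg; rewrite gen_subG.
Qed.

Lemma even_gen_extra P :
  P \subset G -> ~~ odd #|P| -> exists2 g, g \in G :\: P & g \in <<P>>.
Proof.
move=> PG evenP; have [_ [g gP' gP]] := properP (proper_gen_even PG evenP).
by exists g; rewrite // inE gP (subsetP _ _ gP') // gen_subG.
Qed.

Definition gen_value P : nat :=
  if <<P>> == G then 0%N
  else if almost_gen P then (if odd #|P| then 1%N else 2)
  else if odd #|P| then 0%N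
  else if [exists g in G :\: P, almost_gen (g |: P)] then 2 else 1%N.

Lemma gen_value_almost P : <<P>> != G -> almost_gen P ->
  gen_value P = if odd #|P| then 1%N else 2.
Proof. by rewrite /gen_value => /negbTE-> ->. Qed.

Lemma gen_value_not_almost P : ~~ almost_gen P ->
  gen_value P = if odd #|P| then 0%N
                else if [exists g in G :\: P, almost_gen (g |: P)] then 2 else 1%N.
Proof.
move=> notP; rewrite /gen_value (negbTE notP).
by case: eqP => // /almost_gen_gen; rewrite (negbTE notP).
Qed.

Local Notation option_values P := [seq gen_value Q | Q <- gen_options G P].

Lemma gen_value_mex_almost_odd P : P \subset G -> <<P>> != G ->
  almost_gen P -> odd #|P| -> mex (option_values P) = 1%N.
Proof.
move=> PG PnG almostP oddP; apply: mex_gen_options => // [k|g gGP].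
  rewrite ltnS leqn0 => /eqP->; have [g gGP genP] := almost_genP PnG almostP.
  by exists g; rewrite // /gen_value genP eqxx.
have [gG gP] := setDP gGP; rewrite /gen_value; case: ifP => // _.
by rewrite (almost_gen_subset _ (subsetUr _ _) almostP) ?odd_setU1 ?oddP // subUset sub1set gG.
Qed.

Lemma gen_value_mex_almost_even P : P \subset G -> <<P>> != G ->
  almost_gen P -> ~~ odd #|P| -> mex (option_values P) = 2.
Proof.
move=> PG PnG almostP evenP.
have almost_opt g : g \in G :\: P -> almost_gen (g |: P).
  case/setDP=> gG _; apply: almost_gen_subset almostP; last exact: subsetUr.
  by rewrite subUset sub1set gG.
apply: mex_gen_options => // [k|g gGP].
  rewrite ltnS leq_eqVlt ltnS leqn0 => /orP[]/eqP->.
    have [g gGP gP] := even_gen_extra PG evenP; exists g => //.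
    have [_ g_notP] := setDP gGP.
    by rewrite gen_value_almost ?gen_setU1 ?odd_setU1 ?almost_opt // (negbTE evenP).
  have [g gGP genP] := almost_genP PnG almostP.
  by exists g; rewrite // /gen_value genP eqxx.
have [_ gP] := setDP gGP; rewrite /gen_value; case: ifP => // _.
by rewrite almost_opt // odd_setU1 // (negbTE evenP).
Qed.

Lemma gen_value_mex_not_almost_odd P : P \subset G -> <<P>> != G ->
  ~~ almost_gen P -> odd #|P| -> mex (option_values P) = 0%N.
Proof.
move=> PG PnG notP oddP; apply: mex_gen_options => // g /setDP[gG gP].
rewrite /gen_value (negbTE (not_almost_gen_setU1 notP gG)) odd_setU1 // oddP.
by case: ifP => //; case: ifP.
Qed.

Lemma gen_value_mex_not_almost_even P : P \subset G -> <<P>> != G ->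
    ~~ almost_gen P -> ~~ odd #|P| ->
  mex (option_values P) = if [exists g in G :\: P, almost_gen (g |: P)] then 2 else 1%N.
Proof.
move=> PG PnG notP evenP.
have value_opt g : g \in G :\: P -> gen_value (g |: P) = almost_gen (g |: P).
  case/setDP=> gG gP; rewrite /gen_value (negbTE (not_almost_gen_setU1 notP gG)).
  by rewrite odd_setU1 // evenP; case: ifP.
have [g0 g0GP g0P] := even_gen_extra PG evenP.
have value_g0 : gen_value (g0 |: P) = 0%N.
  by rewrite value_opt // almost_gen_setU1 // (negbTE notP).
apply: mex_gen_options => // [k|g gGP]; last first.
  rewrite value_opt //; case: existsP => [_|no_g]; first by case: almost_gen.
  by apply: contra_not_neq no_g => almost_g; exists g; rewrite gGP; case: almost_gen almost_g.
case: existsP => [[g /andP[gGP almost_g]]|_]; last by rewrite ltnS leqn0 => /eqP->; exists g0.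
rewrite ltnS leq_eqVlt ltnS leqn0 => /orP[]/eqP->; last by exists g0.
by exists g; rewrite // value_opt // almost_g.
Qed.

Lemma gen_value_mex P : P \subset G -> gen_value P = mex (option_values P).
Proof.
move=> PG; have [genP|PnG] := eqVneq <<P>> G.
  by rewrite /gen_value /gen_options genP eqxx.
have [almostP|notP] := boolP (almost_gen P); have [oddP|evenP] := boolP (odd #|P|).
- by rewrite gen_value_almost // oddP gen_value_mex_almost_odd.
- by rewrite gen_value_almost // (negbTE evenP) gen_value_mex_almost_even.
- by rewrite gen_value_not_almost // oddP gen_value_mex_not_almost_odd.
- by rewrite gen_value_not_almost // (negbTE evenP) gen_value_mex_not_almost_even.
Qed.

Lemma gen_value0 : #|G| != 1%N ->
  gen_value set0 = if [exists g in G, almost_gen [set g]] then 2 else 1%N.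
Proof.
move=> G_n1; have set0nG : <<set0>> != G by rewrite gen0 eq_sym trivg_card1.
have [cycG|notG] := boolP (almost_gen set0); last first.
  by rewrite gen_value_not_almost // cards0 setD0; under eq_existsb do rewrite setU0.
rewrite gen_value_almost // cards0; case: existsP => // -[].
have [g /setDP[gG _] _] := almost_genP set0nG cycG; exists g; rewrite gG.
by apply: almost_gen_subset cycG; rewrite ?sub1set ?sub0set.
Qed.

End OddGenGame.

Theorem proposition4p1 (gT : finGroupType) (H : {group gT}) :
  odd #|H| ->
  gen_nim H =
    (if #|H| == 1 then 0
     else if (dgen H == 1) || (dgen H == 2) then 2
     else 1).
Proof.
move=> oddH; rewrite /gen_nim (nim_mex_solution (gen_value_mex oddH)) ?sub0set //.
have [H1|Hn1] := eqVneq #|H| 1%N.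
  by rewrite /gen_value gen0 eq_sym trivg_card1 H1.
have dgen_pos : 0 < dgen H by rewrite dgen_gt0.
rewrite gen_value0 // -dgen_le2.
by case: (dgen H) dgen_pos => [|[|[|]]].
Qed.
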